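(* Let $X$ be a locally super-compact $L$-topological space. Then in the $L$-ordered set $({\rm pt}_L\mathcal O(X),{\rm sub}_{\mathcal O(X)})$, for every $x\in X$ the $L$-subset ${\Downarrow}[x]$ is directed and $[x]=\sqcup{\Downarrow}[x]$.
   Context: $L$ is a frame with implication $\to$. $L$-subsets: maps to $L$; nonempty: $\bigvee A=1$; ${\rm sub}_X(A,B)=\bigwedge_xA(x)\to B(x)$. $L$-topology: $\mathcal O(X)\subseteq L^X$ closed under finite meets and arbitrary joins containing all constants $a_X$; interior $A^\circ=\bigvee\{B\in\mathcal O(X):B\le A\}$. Super-compact: nonempty $A\in L^X$ with ${\rm sub}_X(A,\bigvee_iV_i)=\bigvee_i{\rm sub}_X(A,V_i)$ for every family of open $V_i$; ${\rm SC}(X)$ their set. Locally super-compact: each open $A=\bigvee_{B\in{\rm SC}(X)}{\rm sub}_X(B,A)\wedge B^\circ$. A point of $\mathcal O(X)$: $p:\mathcal O(X)\to L$ with $p(A\wedge B)=p(A)\wedge p(B)$, $p(\bigvee_iA_i)=\bigvee_ip(A_i)$, $p(\lambda_X)=\lambda$. ${\rm pt}_L\mathcal O(X)$ is the set of points, $L$-ordered by ${\rm sub}_{\mathcal O(X)}(p,q)=\bigwedge_{A\in\mathcal O(X)}p(A)\to q(A)$. $[x](A)=A(x)$. For an $L$-ordered set $(P,e)$: ${\downarrow}y(x)=e(x,y)$; $\sqcup A=x$ iff $e(x,y)={\rm sub}_P(A,{\downarrow}y)$ for all $y$; directed: nonempty and $D(x)\wedge D(y)\le\bigvee_zD(z)\wedge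 e(x,z)\wedge e(y,z)$; ideal: directed lower set ($I(x)\wedge e(y,x)\le I(y)$); ${\Downarrow}x(y)=\bigwedge\{e(x,\sqcup I)\to I(y):I\text{ ideal with a supremum}\}$. *)

Set Implicit Arguments.
Unset Strict Implicit.

Record Frame := {
  fcar :> Type;
  fle : fcar -> fcar -> Prop;
  fmeet : fcar -> fcar -> fcar;
  fimp : fcar -> fcar -> fcar;
  ftop : fcar;
  fsup : (fcar -> Prop) -> fcar;
  finf : (fcar -> Prop) -> fcar;
  fle_refl : forall a, fle a a;
  fle_trans : forall a b c, fle a b -> fle b c -> fle a c;
  fle_antisym : forall a b, fle a b -> fle b a -> a = b;
  fmeet_l : forall a b, fle (fmeet a b) a;
  fmeet_r : forall a b, fle (fmeet a b) b;
  fmeet_glb : forall a b c, fle c a -> fle c b -> fle c (fmeet a b);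
  ftop_max : forall a, fle a ftop;
  fsup_ub : forall (S : fcar -> Prop) a, S a -> fle a (fsup S);
  fsup_lub : forall (S : fcar -> Prop) b, (forall a, S a -> fle a b) -> fle (fsup S) b;
  finf_lb : forall (S : fcar -> Prop) a, S a -> fle (finf S) a;
  finf_glb : forall (S : fcar -> Prop) b, (forall a, S a -> fle b a) -> fle b (finf S);
  fimp_adj : forall a b c, fle (fmeet a b) c <-> fle a (fimp b c)
}.

Arguments fle {f}.
Arguments fmeet {f}.
Arguments fimp {f}.
Arguments ftop {f}.
Arguments fsup {f}.
Arguments finf {f}.

Definition bjoin (L : Frame) (I : Type) (f : I -> L) : L :=
  fsup (fun a => exists i, a = f i).
Definition bmeet (L : Frame) (I : Type) (f : I -> L) : L :=
  finf (fun a => exists i, a = f i).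

Section LSets.
Variables (L : Frame) (X : Type).

Definition Lnonempty (A : X -> L) : Prop := bjoin A = ftop.

Definition subX (A B : X -> L) : L := bmeet (fun x => fimp (A x) (B x)).

Definition is_Ltopology (O : (X -> L) -> Prop) : Prop :=
  (forall a : L, O (fun _ => a)) /\
  (forall A B, O A -> O B -> O (fun x => fmeet (A x) (B x))) /\
  (forall (I : Type) (V : I -> X -> L), (forall i, O (V i)) ->
      O (fun x => bjoin (fun i => V i x))).

Variable O : (X -> L) -> Prop.

Definition interior (A : X -> L) : X -> L :=
  fun x => bjoin (fun B : {B : X -> L | O B /\ forall y, fle (B y) (A y)} =>
                    proj1_sig B x).

Definition super_compact (A : X -> L) : Prop :=
  Lnonempty A /\
  forall (I : Type) (V : I -> X -> L), (forall i, O (V i)) ->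
    subX A (fun x => bjoin (fun i => V i x)) = bjoin (fun i => subX A (V i)).

Definition locally_super_compact : Prop :=
  forall A, O A -> forall x,
    A x = bjoin (fun B : {B : X -> L | super_compact B} =>
                   fmeet (subX (proj1_sig B) A) (interior (proj1_sig B) x)).

Definition Opens := {A : X -> L | O A}.

Definition is_point (p : Opens -> L) : Prop :=
  (forall A B C : Opens,
     (forall x, proj1_sig C x = fmeet (proj1_sig A x) (proj1_sig B x)) ->
     p C = fmeet (p A) (p B)) /\
  (forall (I : Type) (V : I -> Opens) (W : Opens),
     (forall x, proj1_sig W x = bjoin (fun i => proj1_sig (V i) x)) ->
     p W = bjoin (fun i => p (V i))) /\
  (forall (l : L) (C : Opens), (forall x, proj1_sig C x = l) -> p C = l).

Definition pt := {p : Opens -> L | is_point p}.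

Definition ptE (p q : pt) : L :=
  bmeet (fun A : Opens => fimp (proj1_sig p A) (proj1_sig q A)).

Lemma ptx_is_point (x : X) : is_point (fun A : Opens => proj1_sig A x).
Proof.
  split; [|split].
  - intros A B C H; apply H.
  - intros I V W H; apply H.
  - intros l C H; apply H.
Qed.

Definition ptx (x : X) : pt := exist _ _ (ptx_is_point x).

End LSets.

Section LOrdered.
Variables (L : Frame) (P : Type) (e : P -> P -> L).

Definition down (y : P) : P -> L := fun x => e x y.

Definition subP (A B : P -> L) : L := bmeet (fun x => fimp (A x) (B x)).

Definition is_sup (A : P -> L) (s : P) : Prop :=
  forall y, e s y = subP A (down y).

Definition directed (D : P -> L) : Prop :=
  bjoin D = ftop /\
  forall x y, fle (fmeet (D x) (D y))
                  (bjoin (fun z => fmeet (D z) (fmeet (e x z) (e y z)))).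

Definition lower_set (I : P -> L) : Prop :=
  forall x y, fle (fmeet (I x) (e y x)) (I y).

Definition ideal (I : P -> L) : Prop := directed I /\ lower_set I.

Definition waybelow (x : P) : P -> L :=
  fun y => finf (fun a => exists (I : P -> L) (s : P),
                   ideal I /\ is_sup I s /\ a = fimp (e x s) (I y)).

End LOrdered.

From Stdlib Require Import FunctionalExtensionality.

(* Each super-compact [B] yields the point [p_B := sub_X(B, -)] of [O(X)], and local
   super-compactness says that [[x](U) = \/_B sub_X(B, U) /\ B°(x)], i.e. that [[x]] is the
   join of the [p_B] weighted by [B°(x)].  Hence [approx(r) := \/_B B°(x) /\ e(r, p_B)] is an
   ideal with supremum [[x]], which forces [⇓[x] <= approx].  Conversely [B°(x) <= ⇓[x](p_B)]:
   an ideal [I] with supremum [s] lies below the point [U |-> \/_p I(p) /\ p(U)], whose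
   value at [B°] is below [I(p_B)].  Finally, every L-subset [E] with [B°(x) <= E(p_B)] and
   [E <= approx] is directed with supremum [[x]], and [⇓[x]] is one of them. *)

Local Infix "⊑" := fle (at level 70).

Ltac meet_proj := first [ apply fle_refl
  | eapply fle_trans; [apply fmeet_l|]; meet_proj
  | eapply fle_trans; [apply fmeet_r|]; meet_proj ].
Ltac meets := repeat apply fmeet_glb; meet_proj.

Section FrameFacts.
Context {L : Frame}.
Implicit Types a b c : L.

Lemma fmeet_mono a a' b b' : a ⊑ a' -> b ⊑ b' -> fmeet a b ⊑ fmeet a' b'.
Proof.
  intros Ha Hb; apply fmeet_glb;
    [eapply fle_trans; [apply fmeet_l|exact Ha] | eapply fle_trans; [apply fmeet_r|exact Hb]].
Qed.

Lemma fimp_mp a b : fmeet (fimp a b) a ⊑ b.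
Proof. apply fimp_adj, fle_refl. Qed.

Lemma ftop_le_eq a : ftop ⊑ a -> a = ftop.
Proof. intros; apply fle_antisym; auto using ftop_max. Qed.

Lemma bjoin_ub {I : Type} (f : I -> L) i : f i ⊑ bjoin f.
Proof. apply fsup_ub; eauto. Qed.

Lemma le_bjoin {I : Type} (f : I -> L) i a : a ⊑ f i -> a ⊑ bjoin f.
Proof. intros; eapply fle_trans; [eassumption|apply bjoin_ub]. Qed.

Lemma bjoin_lub {I : Type} (f : I -> L) b : (forall i, f i ⊑ b) -> bjoin f ⊑ b.
Proof. intros H; apply fsup_lub; intros a [i ->]; auto. Qed.

Lemma bmeet_lb {I : Type} (f : I -> L) i : bmeet f ⊑ f i.
Proof. apply finf_lb; eauto. Qed.

Lemma bmeet_glb {I : Type} (f : I -> L) b : (forall i, b ⊑ f i) -> b ⊑ bmeet f.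
Proof. intros H; apply finf_glb; intros a [i ->]; auto. Qed.

Lemma bjoin_fmeet_le {I : Type} (f : I -> L) a c :
  (forall i, fmeet (f i) a ⊑ c) -> fmeet (bjoin f) a ⊑ c.
Proof. intros H; apply fimp_adj, bjoin_lub; intro i; apply fimp_adj, H. Qed.

Lemma fmeet_bjoin_le {I : Type} (f : I -> L) a c :
  (forall i, fmeet a (f i) ⊑ c) -> fmeet a (bjoin f) ⊑ c.
Proof.
  intros H; apply (fle_trans (b := fmeet (bjoin f) a)); [meets|].
  apply bjoin_fmeet_le; intro i; eapply fle_trans; [|apply (H i)]; meets.
Qed.

End FrameFacts.

Section LInclusion.
Context {L : Frame} {X : Type}.
Implicit Types A B C : X -> L.

Lemma le_subX A B (c : L) : (forall z, fmeet c (A z) ⊑ B z) -> c ⊑ subX A B.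
Proof. intros H; apply bmeet_glb; intro z; apply fimp_adj, H. Qed.

Lemma subX_mp A B z : fmeet (subX A B) (A z) ⊑ B z.
Proof.
  eapply fle_trans; [|apply (fimp_mp (A z))].
  apply fmeet_mono; [apply (bmeet_lb (fun z => fimp (A z) (B z)))|apply fle_refl].
Qed.

Lemma subX_mono_r A B B' : (forall z, B z ⊑ B' z) -> subX A B ⊑ subX A B'.
Proof. intros H; apply le_subX; intro z; eapply fle_trans; [apply subX_mp|apply H]. Qed.

Lemma subX_trans A B C : fmeet (subX A B) (subX B C) ⊑ subX A C.
Proof.
  apply le_subX; intro z; eapply fle_trans; [|apply (subX_mp B C z)].
  apply fmeet_glb; [meets|]; eapply fle_trans; [|apply (subX_mp A B z)]; meets.
Qed.

Lemma subX_refl A : subX A A = ftop.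
Proof. apply ftop_le_eq, le_subX; intro z; apply fmeet_r. Qed.

End LInclusion.

Section Points.
Context {L : Frame} {X : Type} {O : (X -> L) -> Prop}.
Hypothesis HO : is_Ltopology O.
Local Notation e := (@ptE L X O).

Lemma ptE_refl (p : pt O) : ptE p p = ftop.
Proof. apply subX_refl. Qed.

Lemma interior_open B : O (interior O B).
Proof.
  apply (proj2 (proj2 HO) _ (fun i => proj1_sig i)).
  intro i; exact (proj1 (proj2_sig i)).
Qed.

Lemma interior_le B z : interior O B z ⊑ B z.
Proof. apply bjoin_lub; intro i; apply (proj2 (proj2_sig i)). Qed.

Definition interior_opens B : Opens O := exist _ _ (interior_open B).

Section PointLaws.
Variable p : pt O.

Lemma pt_meet (A B C : Opens O) :
  (forall x, proj1_sig C x = fmeet (proj1_sig A x) (proj1_sig B x)) ->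
  proj1_sig p C = fmeet (proj1_sig p A) (proj1_sig p B).
Proof. apply (proj1 (proj2_sig p)). Qed.

Lemma pt_join I (V : I -> Opens O) (W : Opens O) :
  (forall x, proj1_sig W x = bjoin (fun i => proj1_sig (V i) x)) ->
  proj1_sig p W = bjoin (fun i => proj1_sig p (V i)).
Proof. apply (proj1 (proj2 (proj2_sig p))). Qed.

Lemma pt_const (l : L) (C : Opens O) : (forall x, proj1_sig C x = l) -> proj1_sig p C = l.
Proof. apply (proj2 (proj2 (proj2_sig p))). Qed.

Lemma pt_mono (A A' : Opens O) :
  (forall z, proj1_sig A z ⊑ proj1_sig A' z) -> proj1_sig p A ⊑ proj1_sig p A'.
Proof.
  intros H; rewrite (pt_meet A A' A); [apply fmeet_r|].
  intro z; apply fle_antisym; [apply fmeet_glb; [apply fle_refl|apply H]|apply fmeet_l].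
Qed.

(* Via the open constant L-subset [c], which every point maps to [c]. *)
Lemma pt_fmeet_const_le (A U : Opens O) (c : L) :
  (forall z, fmeet (proj1_sig A z) c ⊑ proj1_sig U z) ->
  fmeet (proj1_sig p A) c ⊑ proj1_sig p U.
Proof.
  intros H; destruct HO as [Hc [Hm _]].
  pose (K := exist O (fun _ => c) (Hc c) : Opens O).
  pose (C := exist O (fun z => fmeet (proj1_sig A z) c) (Hm _ _ (proj2_sig A) (Hc c)) : Opens O).
  rewrite <- (pt_const c K), <- (pt_meet A K C) by reflexivity.
  apply pt_mono, H.
Qed.

End PointLaws.

Lemma ptE_mp (p q : pt O) (U : Opens O) :
  fmeet (ptE p q) (proj1_sig p U) ⊑ proj1_sig q U.
Proof. apply subX_mp. Qed.

Lemma ptE_trans (p q r : pt O) : fmeet (ptE p q) (ptE q r) ⊑ ptE p r.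
Proof. apply subX_trans. Qed.

Definition SC := {B : X -> L | super_compact O B}.

Lemma super_compact_is_point {B : X -> L} :
  super_compact O B -> is_point (fun U : Opens O => subX B (proj1_sig U)).
Proof.
  intros [Hne Hjoin]; split; [|split].
  - intros U V W H; apply fle_antisym.
    + apply fmeet_glb; apply subX_mono_r; intro z; rewrite H; [apply fmeet_l|apply fmeet_r].
    + apply le_subX; intro z; rewrite H.
      apply fmeet_glb; [eapply fle_trans; [|apply (subX_mp B (proj1_sig U) z)]
                       |eapply fle_trans; [|apply (subX_mp B (proj1_sig V) z)]]; meets.
  - intros I V W H.
    replace (proj1_sig W) with (fun x => bjoin (fun i => proj1_sig (V i) x))
      by (symmetry; apply functional_extensionality, H).
    apply Hjoin; intro i; exact (proj2_sig (V i)).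
  - intros l C H.
    replace (proj1_sig C) with (fun _ : X => l) by (symmetry; apply functional_extensionality, H).
    apply fle_antisym; [|apply le_subX; intro z; apply fmeet_l].
    apply (fle_trans (b := fmeet (subX B (fun _ => l)) (bjoin B))).
    + apply fmeet_glb; [apply fle_refl|]; unfold Lnonempty in Hne; rewrite Hne; apply ftop_max.
    + apply fmeet_bjoin_le; intro z; apply subX_mp.
Qed.

Definition sc_pt (B : SC) : pt O := exist _ _ (super_compact_is_point (proj2_sig B)).

Lemma pt_interior_le_ptE (B : SC) (p : pt O) :
  proj1_sig p (interior_opens (proj1_sig B)) ⊑ ptE (sc_pt B) p.
Proof.
  apply le_subX; intro U; simpl.
  eapply fle_trans; [|apply pt_fmeet_const_le]; [apply fle_refl|].
  intro z; simpl; eapply fle_trans; [|apply (subX_mp (proj1_sig B) _ z)].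
  eapply fle_trans; [apply fmeet_mono; [apply interior_le|apply fle_refl]|]; meets.
Qed.

Lemma subX_le_ptE_sc_pt (B C : SC) :
  subX (proj1_sig C) (proj1_sig B) ⊑ ptE (sc_pt B) (sc_pt C).
Proof. apply le_subX; intro U; apply subX_trans. Qed.

Section DirectedJoin.
Variable I : pt O -> L.
Hypothesis HI : directed e I.

Definition directed_join_fun (U : Opens O) : L :=
  bjoin (fun p : pt O => fmeet (I p) (proj1_sig p U)).

(* Directedness of [I] is what makes this join preserve binary meets. *)
Lemma directed_join_meet (A B C : Opens O) :
  (forall x, proj1_sig C x = fmeet (proj1_sig A x) (proj1_sig B x)) ->
  fmeet (directed_join_fun A) (directed_join_fun B) ⊑ directed_join_fun C.
Proof.
  intros H; apply bjoin_fmeet_le; intro p; apply fmeet_bjoin_le; intro p'.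
  apply (fle_trans (b := fmeet (bjoin (fun r => fmeet (I r) (fmeet (ptE p r) (ptE p' r))))
                               (fmeet (proj1_sig p A) (proj1_sig p' B)))).
  { apply fmeet_glb; [eapply fle_trans; [|apply (proj2 HI p p')]|]; meets. }
  apply bjoin_fmeet_le; intro r; apply (le_bjoin _ r).
  apply fmeet_glb; [meets|]; rewrite (pt_meet r A B C H).
  apply fmeet_glb; [eapply fle_trans; [|apply (ptE_mp p r A)]
                  |eapply fle_trans; [|apply (ptE_mp p' r B)]]; meets.
Qed.

Lemma directed_join_is_point : is_point directed_join_fun.
Proof.
  split; [|split].
  - intros A B C H; apply fle_antisym; [|apply directed_join_meet, H].
    apply fmeet_glb; apply bjoin_lub; intro p; apply (le_bjoin _ p);
      apply fmeet_mono; try apply fle_refl; apply pt_mono; intro z; rewrite H;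
      [apply fmeet_l|apply fmeet_r].
  - intros J V W H; apply fle_antisym.
    + apply bjoin_lub; intro p; rewrite (pt_join p J V W H).
      apply fmeet_bjoin_le; intro i; apply (le_bjoin _ i), (le_bjoin _ p), fle_refl.
    + apply bjoin_lub; intro i; apply bjoin_lub; intro p; apply (le_bjoin _ p).
      apply fmeet_mono; [apply fle_refl|]; rewrite (pt_join p J V W H).
      apply (bjoin_ub (fun i => proj1_sig p (V i))).
  - intros l C H; apply fle_antisym.
    + apply bjoin_lub; intro p; rewrite (pt_const p l C H); apply fmeet_r.
    + apply (fle_trans (b := fmeet l (bjoin I))).
      * apply fmeet_glb; [apply fle_refl|]; rewrite (proj1 HI); apply ftop_max.
      * apply fmeet_bjoin_le; intro p; apply (le_bjoin _ p).
        rewrite (pt_const p l C H); meets.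
Qed.

Definition directed_join : pt O := exist _ _ directed_join_is_point.

Lemma le_ptE_directed_join (p : pt O) : I p ⊑ ptE p directed_join.
Proof. apply le_subX; intro U; apply (bjoin_ub (fun p => fmeet (I p) (proj1_sig p U)) p). Qed.

Lemma sup_ptE_directed_join (s : pt O) : is_sup e I s -> ptE s directed_join = ftop.
Proof.
  intros Hs; rewrite (Hs directed_join); apply ftop_le_eq, le_subX; intro p.
  eapply fle_trans; [apply fmeet_r|apply le_ptE_directed_join].
Qed.

Lemma directed_join_interior_le (B : SC) :
  lower_set e I ->
  proj1_sig directed_join (interior_opens (proj1_sig B)) ⊑ I (sc_pt B).
Proof.
  intros Hlow; apply bjoin_lub; intro p; eapply fle_trans; [|apply (Hlow p (sc_pt B))].
  apply fmeet_mono; [apply fle_refl|apply pt_interior_le_ptE].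
Qed.

End DirectedJoin.

End Points.

Arguments SC {L X} O.

Section WayBelowPtx.
Context {L : Frame} {X : Type} {O : (X -> L) -> Prop}.
Hypothesis HO : is_Ltopology O.
Hypothesis Hlsc : locally_super_compact O.
Variable x : X.
Local Notation e := (@ptE L X O).
Local Notation int_x B := (interior O (proj1_sig B) x).

Definition approx (r : pt O) : L := bjoin (fun B : SC O => fmeet (int_x B) (e r (sc_pt B))).

Lemma top_le_bjoin_interior : ftop ⊑ bjoin (fun B : SC O => int_x B).
Proof.
  rewrite (Hlsc (fun _ => ftop) (proj1 HO ftop) x).
  apply bjoin_lub; intro B; apply (le_bjoin _ B), fmeet_r.
Qed.

Lemma approx_meet_le (p q : pt O) :
  fmeet (approx p) (approx q) ⊑
  bjoin (fun C : SC O => fmeet (int_x C) (fmeet (e p (sc_pt C)) (e q (sc_pt C)))).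
Proof.
  apply bjoin_fmeet_le; intro B; apply fmeet_bjoin_le; intro B'.
  pose (A := exist O (fun z => fmeet (interior O (proj1_sig B) z) (interior O (proj1_sig B') z))
                   (proj1 (proj2 HO) _ _ (interior_open HO _) (interior_open HO _)) : Opens O).
  apply (fle_trans (b := fmeet (proj1_sig A x) (fmeet (e p (sc_pt B)) (e q (sc_pt B'))))); [meets|].
  rewrite (Hlsc _ (proj2_sig A) x).
  apply bjoin_fmeet_le; intro C; apply (le_bjoin _ C).
  assert (HCB : forall D : SC O, (forall z, proj1_sig A z ⊑ interior O (proj1_sig D) z) ->
                  subX (proj1_sig C) (proj1_sig A) ⊑ e (sc_pt D) (sc_pt C)).
  { intros D HD; eapply fle_trans; [|apply subX_le_ptE_sc_pt].
    apply subX_mono_r; intro z; eapply fle_trans; [apply HD|apply interior_le]. }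
  apply fmeet_glb; [meets|apply fmeet_glb].
  - eapply fle_trans; [|apply (ptE_trans p (sc_pt B))]; apply fmeet_glb; [meets|].
    eapply fle_trans; [|apply HCB; intro z; apply fmeet_l]; meets.
  - eapply fle_trans; [|apply (ptE_trans q (sc_pt B'))]; apply fmeet_glb; [meets|].
    eapply fle_trans; [|apply HCB; intro z; apply fmeet_r]; meets.
Qed.

Section Bounds.
Variable E : pt O -> L.
Hypothesis interior_le_E : forall B : SC O, int_x B ⊑ E (sc_pt B).

Lemma is_sup_ptx_of_bounds :
  (forall r, E r ⊑ e r (ptx O x)) -> is_sup e E (ptx O x).
Proof.
  intros HE y; apply fle_antisym.
  - apply le_subX; intro r; eapply fle_trans; [|apply (ptE_trans r (ptx O x) y)].
    apply fmeet_glb; [eapply fle_trans; [apply fmeet_r|apply HE]|apply fmeet_l].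
  - apply le_subX; intro U; simpl; rewrite (Hlsc _ (proj2_sig U) x).
    apply fmeet_bjoin_le; intro C; eapply fle_trans; [|apply (ptE_mp (sc_pt C) y U)].
    apply fmeet_glb; [|meets].
    eapply fle_trans; [|apply (fimp_mp (E (sc_pt C)))]; apply fmeet_glb.
    + eapply fle_trans; [apply fmeet_l|].
      apply (bmeet_lb (fun r => fimp (E r) (e r y)) (sc_pt C)).
    + eapply fle_trans; [|apply interior_le_E]; meets.
Qed.

Lemma directed_of_bounds : (forall r, E r ⊑ approx r) -> directed e E.
Proof.
  intros HE; split.
  - apply ftop_le_eq; eapply fle_trans; [apply top_le_bjoin_interior|].
    apply bjoin_lub; intro B; apply (le_bjoin _ (sc_pt B)), interior_le_E.
  - intros p q; eapply fle_trans; [apply fmeet_mono; apply HE|].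
    eapply fle_trans; [apply approx_meet_le|].
    apply bjoin_lub; intro C; apply (le_bjoin _ (sc_pt C)).
    apply fmeet_glb; [eapply fle_trans; [apply fmeet_l|apply interior_le_E]|apply fmeet_r].
Qed.

End Bounds.

Lemma interior_le_approx (B : SC O) : int_x B ⊑ approx (sc_pt B).
Proof.
  apply (le_bjoin _ B), fmeet_glb; [apply fle_refl|].
  rewrite ptE_refl; apply ftop_max.
Qed.

Lemma approx_le_ptE_ptx (r : pt O) : approx r ⊑ e r (ptx O x).
Proof.
  apply bjoin_lub; intro B; eapply fle_trans; [|apply (ptE_trans r (sc_pt B))].
  apply fmeet_glb; [meets|]; eapply fle_trans; [apply fmeet_l|].
  apply (pt_interior_le_ptE HO B (ptx O x)).
Qed.

Lemma approx_lower_set : lower_set e approx.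
Proof.
  intros r r'; apply bjoin_fmeet_le; intro B; apply (le_bjoin _ B).
  apply fmeet_glb; [meets|]; eapply fle_trans; [|apply (ptE_trans r' r)]; meets.
Qed.

Lemma approx_ideal : ideal e approx.
Proof.
  split; [|exact approx_lower_set].
  apply directed_of_bounds; [exact interior_le_approx|intro r; apply fle_refl].
Qed.

Lemma approx_is_sup : is_sup e approx (ptx O x).
Proof. apply is_sup_ptx_of_bounds; [exact interior_le_approx|exact approx_le_ptE_ptx]. Qed.

Lemma waybelow_le_approx (r : pt O) : waybelow e (ptx O x) r ⊑ approx r.
Proof.
  eapply fle_trans.
  { apply finf_lb; exists approx, (ptx O x); split; [exact approx_ideal|split; [exact approx_is_sup|reflexivity]]. }
  rewrite ptE_refl; eapply fle_trans; [|apply (fimp_mp ftop)].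
  apply fmeet_glb; [apply fle_refl|apply ftop_max].
Qed.

(* If [I] is an ideal with supremum [s], the point [q := directed_join I] satisfies
   [e s q = 1], so [B°(x) /\ e [x] s <= s(B°) <= q(B°) <= I (sc_pt B)]. *)
Lemma interior_le_waybelow (B : SC O) : int_x B ⊑ waybelow e (ptx O x) (sc_pt B).
Proof.
  apply finf_glb; intros a [I [s [[HId Hlow] [Hsup ->]]]]; apply fimp_adj.
  pose (U := interior_opens HO (proj1_sig B)).
  apply (fle_trans (b := proj1_sig s U)).
  { eapply fle_trans; [|apply (ptE_mp (ptx O x) s U)]; simpl; meets. }
  apply (fle_trans (b := proj1_sig (directed_join _ HId) U)).
  { eapply fle_trans; [|apply (ptE_mp s (directed_join _ HId) U)].
    rewrite (sup_ptE_directed_join _ HId _ Hsup); apply fmeet_glb; [apply ftop_max|apply fle_refl]. }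
  apply (directed_join_interior_le HO _ HId B Hlow).
Qed.

End WayBelowPtx.

Theorem proposition4p5 (L : Frame) (X : Type) (O : (X -> L) -> Prop)
  (HO : is_Ltopology O) (Hlsc : locally_super_compact O) (x : X) :
  directed (@ptE L X O) (waybelow (@ptE L X O) (ptx O x)) /\
  is_sup (@ptE L X O) (waybelow (@ptE L X O) (ptx O x)) (ptx O x).
Proof.
  pose proof (interior_le_waybelow HO x) as Hlow.
  pose proof (waybelow_le_approx HO Hlsc x) as Hup.
  split.
  - exact (directed_of_bounds HO Hlsc x _ Hlow Hup).
  - apply (is_sup_ptx_of_bounds Hlsc x _ Hlow); intro r.
    exact (fle_trans (Hup r) (approx_le_ptE_ptx HO x r)).
Qed.
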